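(* Let $n\geq 2$. If a closed subgroup $H$ of $\mathrm{Aut}(\mathbb{A}^n_{\mathbb{C}})$ strictly contains $\mathcal{B}_n$, then $H$ contains a linear automorphism (i.e. an element $(\sum_j a_{1j}x_j,\dots,\sum_j a_{nj}x_j)$ with $(a_{ij})\in\mathrm{GL}_n(\mathbb{C})$) which does not belong to $\mathcal{B}_n$.
   Context: $\mathrm{Aut}(\mathbb{A}^n_{\mathbb{C}})$ is the group of polynomial automorphisms $f=(f_1,\dots,f_n)$ of $\mathbb{A}^n_{\mathbb{C}}$, viewed as an ind-group filtered by degree ($\deg f=\max\deg f_i$); a subset is closed if its intersection with each set of automorphisms of degree $\le d$ is Zariski closed in that variety (a locally closed subset of the affine space $(\mathbb{C}[x_1,\dots,x_n]_{\le d})^n$). $\mathcal{B}_n=\{f: f_i\in\mathbb{C}[x_i,\dots,x_n]\ \forall i\}$ is the triangular (Jonquières) subgroup. *)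

From HB Require Import structures.
From mathcomp Require Import all_boot all_order all_algebra.
From mathcomp Require Import reals.
From mathcomp Require Import complex.
From mathcomp Require Import mpoly.
Set Implicit Arguments. Unset Strict Implicit. Unset Printing Implicit Defensive.
Import Order.TTheory GRing.Theory Num.Theory.
Local Open Scope ring_scope.


Section PolyAut.
Variables (R : realType) (n : nat).
Local Notation C := (R[i]).

Definition pendo := n.-tuple {mpoly C[n]}.

Definition pcomp (f g : pendo) : pendo := [tuple (tnth f i) \mPo g | i < n].

Definition pid : pendo := [tuple 'X_i | i < n].

Definition pinverse (f g : pendo) : Prop := pcomp f g = pid /\ pcomp g f = pid.

Definition is_aut (f : pendo) : Prop := exists g : pendo, pinverse f g.

(* deg f = max_i deg f_i  (msize p = 1 + total degree, 0 for p = 0). *)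
Definition deg_le (d : nat) (f : pendo) : Prop := forall i : 'I_n, (msize (tnth f i) <= d.+1)%N.

(* Coordinates of the affine space (C[x_1..x_n]_{<= d})^n: pairs (i, m), with m a
   monomial of degree <= d; the coordinate is the coefficient of m in f_i. *)
Definition coord_index (d : nat) : finType := ('I_n * 'X_{1..n < d.+1})%type.

Definition coefvec (d : nat) (f : pendo) : 'I_#|coord_index d| -> C :=
  fun j => let im := enum_val j in (tnth f im.1)@_(bmnm im.2).

(* A subset A of Aut(A^n) is closed in the ind-group: for each d, A intersected with
   the automorphisms of degree <= d is the trace of a Zariski closed subset of the
   affine space (C[x]_{<=d})^n, i.e. of the common zero locus of a family S of
   polynomial functions in the coordinates. *)
Definition ind_closed (A : pendo -> Prop) : Prop :=
  forall d : nat, exists S : {mpoly C[#|coord_index d|]} -> Prop,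
    forall f : pendo, is_aut f -> deg_le d f ->
      (A f <-> (forall P, S P -> P.@[@coefvec d f] = 0)).

Definition is_aut_subgroup (H : pendo -> Prop) : Prop :=
  [/\ forall f, H f -> is_aut f,
      H pid,
      forall f g, H f -> H g -> H (pcomp f g)
    & forall f g, H f -> pinverse f g -> H g].

(* The triangular (de Jonquieres) subgroup: f automorphism with f_i in C[x_i,...,x_n]. *)
Definition jonq (f : pendo) : Prop :=
  is_aut f /\ forall (i : 'I_n) (m : 'X_{1..n}), m \in msupp (tnth f i) ->
                forall j : 'I_n, (j < i)%N -> m j = 0%N.

Definition linear_aut (f : pendo) : Prop :=
  exists a : 'M[C]_n, a \in unitmx /\
    forall i : 'I_n, tnth f i = \sum_(j < n) a i j *: 'X_j.

End PolyAut.

From Pilot Require Import Defs.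
From mathcomp Require Import all_boot all_order all_algebra.
From mathcomp Require Import reals complex mpoly ring.
Set Implicit Arguments. Unset Strict Implicit. Unset Printing Implicit Defensive.
Import Order.TTheory GRing.Theory Num.Theory.
Local Open Scope ring_scope.

(* Since f in H is not triangular, some derivative d_j f_i with j < i is a
   nonzero polynomial, hence nonzero at some point a. Composing f with
   translations, which are triangular, gives g in H with g(0) = 0 whose linear
   part is the Jacobian matrix of f at a, with a nonzero entry below the
   diagonal. The conjugates s^-1 g(s x) by dilations lie in H, have bounded
   degree, and their coefficients are polynomials in s whose values at s = 0
   are the coefficients of the linear part of g; as H is closed, it contains
   that linear automorphism. *)

Section MPolyComposition.
Variables (F : comNzRingType) (n k : nat).
Implicit Types (p : {mpoly F[n]}) (h : n.-tuple {mpoly F[k]}).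

Lemma mderivXU (i j : 'I_n) : ('X_i : {mpoly F[n]})^`M(j) = (i == j)%:R%:MP.
Proof.
rewrite mderivX mnm1E; case: eqP => [->|_]; last by rewrite scale0r mpolyC0.
rewrite (_ : (U_(j) - U_(j))%MM = 0%MM) ?mpolyX0 ?scale1r //.
by apply/mnmP => l; rewrite mnmBE mnm0E subnn.
Qed.

Lemma mderiv_comp p h (j : 'I_k) :
  (p \mPo h)^`M(j) = \sum_(i < n) (p^`M(i) \mPo h) * (tnth h i)^`M(j).
Proof.
pose chain q := (q \mPo h)^`M(j) = \sum_(i < n) (q^`M(i) \mPo h) * (tnth h i)^`M(j).
have chainM q1 q2 : chain q1 -> chain q2 -> chain (q1 * q2).
  rewrite /chain rmorphM mderivM => -> ->; rewrite mulr_suml mulr_sumr -big_split.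
  by apply: eq_bigr => i _; rewrite mderivM rmorphD !rmorphM /=; ring.
have chain1 : chain 1.
  rewrite /chain rmorph1 -mpolyC1 mderivC.
  by rewrite big1 // => l _; rewrite mderivC comp_mpolyC mul0r.
have chainX m : chain 'X_[m].
  rewrite mpolyXE_id; apply: big_ind => // i _.
  elim: (m i) => [|e ih]; first by rewrite expr0.
  rewrite exprS; apply: chainM ih.
  rewrite /chain comp_mpolyXU -tnth_nth (bigD1 i) //= mderivXU eqxx comp_mpolyC mul1r.
  by rewrite big1 ?addr0 // => l /negbTE li; rewrite mderivXU eq_sym li comp_mpolyC mul0r.
elim/mpolyind: p => [|c m p _ _ ih].
  by rewrite /chain comp_mpoly0 mderiv0 big1 // => i _; rewrite mderiv0 comp_mpoly0 mul0r.
rewrite /chain comp_mpolyD comp_mpolyZ mderivD mderivZ chainX ih scaler_sumr -big_split.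
by apply: eq_bigr => i _; rewrite mderivD mderivZ comp_mpolyD comp_mpolyZ mulrDl scalerAl.
Qed.

Lemma mcoeff0_comp p h : (p \mPo h)@_0 = p.@[fun i => (tnth h i)@_0].
Proof.
elim/mpolyind: p => [|c m p _ _ ih]; first by rewrite comp_mpoly0 mcoeff0 meval0.
rewrite comp_mpolyD comp_mpolyZ mcoeffD mcoeffZ mevalD mevalZ ih comp_mpolyX mevalX.
by rewrite rmorph_prod; congr (_ * _ + _); apply: eq_bigr => i _; rewrite rmorphXn.
Qed.

Lemma mcoeffU_mderiv (q : {mpoly F[k]}) (j : 'I_k) : q@_U_(j) = (q^`M(j))@_0.
Proof. by rewrite mcoeff_mderiv add0m mnm0E mulr1n. Qed.

Lemma mcoeff0M (q1 q2 : {mpoly F[k]}) : (q1 * q2)@_0 = q1@_0 * q2@_0.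
Proof. exact: rmorphM. Qed.

Lemma mcoeffU_comp p h (j : 'I_k) :
  (p \mPo h)@_U_(j) = \sum_(i < n) (p^`M(i)).@[fun l => (tnth h l)@_0] * (tnth h i)@_U_(j).
Proof.
rewrite mcoeffU_mderiv mderiv_comp (raddf_sum (mcoeff 0)); apply: eq_bigr => i _ /=.
by rewrite mcoeff0M mcoeff0_comp -mcoeffU_mderiv.
Qed.

End MPolyComposition.

Lemma mcoeff0_meval (F : comNzRingType) n (p : {mpoly F[n]}) : p@_0 = p.@[fun _ => 0].
Proof.
rewrite -{1}[p]comp_mpoly_id mcoeff0_comp; apply: meval_eq => i.
by rewrite tnth_mktuple mcoeffX mnm1_eq0.
Qed.

Lemma radix_inj B k (a b : 'I_k -> nat) :
    (forall i, a i < B)%N -> (forall i, b i < B)%N ->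
  (\sum_(i < k) B ^ i * a i = \sum_(i < k) B ^ i * b i)%N -> a =1 b.
Proof.
elim: k a b => [|k ih] a b aB bB; first by move=> _ [].
have B0 : (0 < B)%N := leq_ltn_trans (leq0n _) (aB ord0).
have sumS c : (\sum_(i < k) B ^ bump 0 i * c (lift ord0 i) =
               B * \sum_(i < k) B ^ i * c (lift ord0 i))%N.
  by rewrite big_distrr; apply: eq_bigr => i _; rewrite /bump /= add1n expnS mulnA.
rewrite !big_ord_recl !expn0 !mul1n !sumS => e.
have e0 : a ord0 = b ord0.
  have := congr1 (modn^~ B) e.
  by rewrite ![(_ + B * _)%N]addnC ![(B * _)%N]mulnC !modnMDl !modn_small.
move: e; rewrite e0 => /addnI /eqP; rewrite eqn_pmul2l // => /eqP /ih ea i.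
by case: (unliftP ord0 i) => [j ->|->]; [apply: ea | ].
Qed.

Lemma horner_mmap_polyC (F : comNzRingType) n (P : {mpoly F[n]}) (V : 'I_n -> {poly F}) t :
  (mmap polyC V P).[t] = P.@[fun i => (V i).[t]].
Proof.
rewrite mevalE horner_sum; apply: eq_bigr => m _.
by rewrite hornerCM horner_prod; congr (_ * _); apply: eq_bigr => i _; rewrite horner_exp.
Qed.

Section CharacteristicZero.
Variable F : numDomainType.

Lemma poly_nonroot_nat (Q : {poly F}) : Q != 0 -> exists k : nat, Q.[k.+1%:R] != 0.
Proof.
move=> Q0; have /hasP[k _ Qk] : has (fun k => Q.[k.+1%:R] != 0) (iota 0 (size Q)).
  apply: contraNT Q0; rewrite -all_predC => /allP /= Qroots; apply/eqP.
  apply: (roots_geq_poly_eq0 (rs := [seq k.+1%:R | k <- iota 0 (size Q)])).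
  - by apply/allP => _ /mapP[k kQ ->]; exact/negbNE/Qroots.
  - by rewrite map_inj_uniq ?iota_uniq // => i j /eqP; rewrite eqr_nat eqSS => /eqP.
  - by rewrite size_map size_iota.
by exists k.
Qed.

Lemma mpoly_nonroot n (P : {mpoly F[n]}) : P != 0 -> exists v, P.@[v] != 0.
Proof.
move=> P0; case E: (msupp P) => [|m0 s]; first by rewrite -msupp_eq0 E in P0.
have m0P : m0 \in msupp P by rewrite E mem_head.
(* Kronecker substitution: x_i |-> t ^ (B ^ i), with B above every exponent
   occurring in P, sends distinct monomials of P to distinct powers of t. *)
pose B := msize P; pose kron (m : 'X_{1..n}) := (\sum_(i < n) B ^ i * m i)%N.
have ltB m : m \in msupp P -> forall i, (m i < B)%N.
  move=> mP i; apply: leq_ltn_trans (msize_mdeg_lt mP).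
  by rewrite mdegE (bigD1 i) //= leq_addr.
pose Q := mmap polyC (fun i => 'X^(B ^ i)) P.
have mmap1_kron m : mmap1 (fun i => 'X^(B ^ i)) m = 'X^(kron m) :> {poly F}.
  by rewrite /mmap1; under eq_bigr do rewrite -exprM; rewrite prodrXr.
have Q_kron : Q`_(kron m0) = P@_m0.
  rewrite /Q /mmap coef_sum (bigD1_seq m0) ?msupp_uniq //= mmap1_kron coefCM coefXn eqxx mulr1.
  rewrite big1_seq ?addr0 // => m /andP[mm0 mP]; rewrite mmap1_kron coefCM coefXn.
  case: eqP => [/(radix_inj (ltB m0 m0P) (ltB m mP)) eq_m|]; last by rewrite mulr0.
  by move: mm0; rewrite (_ : m = m0) ?eqxx //; apply/mnmP => i; rewrite eq_m.
have /poly_nonroot_nat[k Qk] : Q != 0.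
  by apply: contraTneq m0P => Q0; rewrite -mcoeff_eq0 -Q_kron Q0 coef0.
by exists (fun i => ('X^(B ^ i)).[k.+1%:R]); rewrite -horner_mmap_polyC.
Qed.

Lemma meval_poly_at0 n (P : {mpoly F[n]}) (V : 'I_n -> {poly F}) :
  (forall s, s != 0 -> P.@[fun i => (V i).[s]] = 0) -> P.@[fun i => (V i).[0]] = 0.
Proof.
move=> PV; rewrite -horner_mmap_polyC.
suff -> : mmap polyC V P = 0 by rewrite horner0.
apply/eqP; apply: contraT => /poly_nonroot_nat[k].
by rewrite horner_mmap_polyC PV ?eqxx // pnatr_eq0.
Qed.

Lemma mderiv_eq0_mnm n (P : {mpoly F[n]}) j m :
  P^`M(j) = 0 -> m \in msupp P -> m j = 0%N.
Proof.
move=> Pj mP; apply/eqP; apply: contraTT mP; rewrite -lt0n -mcoeff_eq0 => mj.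
have Ujm : (U_(j) <= m)%MM by apply/mnm_lepP => i; rewrite mnm1E; case: eqP => [<-|].
have := mcoeff_mderiv j P (m - U_(j)); rewrite Pj mcoeff0 submK // mnmBE mnm1E eqxx.
by rewrite subn1 prednK // => /esym/eqP; rewrite mulrn_eq0 eqn0Ngt mj.
Qed.

End CharacteristicZero.

Section AffineMaps.
Variables (F : comNzRingType) (n : nat).
Implicit Types (p : {mpoly F[n]}) (g h : n.-tuple {mpoly F[n]}) (A : 'M[F]_n).

Definition transl (a : 'I_n -> F) : n.-tuple {mpoly F[n]} := [tuple 'X_i + (a i)%:MP | i < n].

Definition dilation (s : F) : n.-tuple {mpoly F[n]} := [tuple s *: 'X_i | i < n].

Definition linmap A : n.-tuple {mpoly F[n]} := [tuple \sum_j A i j *: 'X_j | i < n].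

Definition linpart g : 'M[F]_n := \matrix_(i, j) (tnth g i)@_U_(j).

Lemma mcoeff_transl a i m :
  (tnth (transl a) i)@_m = (U_(i)%MM == m)%:R + a i * (m == 0%MM)%:R.
Proof. by rewrite tnth_mktuple mcoeffD mcoeffX mcoeffC. Qed.

Lemma mcoeff0_comp_transl p a : (p \mPo transl a)@_0 = p.@[a].
Proof.
rewrite mcoeff0_comp; apply: meval_eq => i.
by rewrite mcoeff_transl mnm1_eq0 eqxx add0r mulr1.
Qed.

Lemma mcoeffU_comp_transl p a j : (p \mPo transl a)@_U_(j) = (p^`M(j)).@[a].
Proof.
have translU i : (tnth (transl a) i)@_U_(j) = (i == j)%:R.
  by rewrite mcoeff_transl eq_mnm1 mnm1_eq0 mulr0 addr0.
rewrite mcoeffU_comp (bigD1 j) //= translU eqxx mulr1 big1 ?addr0 => [|i /negbTE ij].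
  by apply: meval_eq => i; rewrite mcoeff_transl mnm1_eq0 eqxx add0r mulr1.
by rewrite translU ij mulr0.
Qed.

Lemma mcoeff_comp_dilation p s m : (p \mPo dilation s)@_m = s ^+ mdeg m * p@_m.
Proof.
elim/mpolyind: p => [|c m' p _ _ ih]; first by rewrite comp_mpoly0 !mcoeff0 mulr0.
rewrite comp_mpolyD comp_mpolyZ !mcoeffD !mcoeffZ ih mulrDr; congr (_ + _).
have -> : 'X_[m'] \mPo dilation s = s ^+ mdeg m' *: 'X_[m'].
  rewrite comp_mpolyX (eq_bigr (fun i => s ^+ m' i *: 'X_i ^+ m' i)).
    by rewrite scaler_prod prodrXr -mdegE -mpolyXE_id.
  by move=> i _; rewrite tnth_mktuple exprZn.
by rewrite mcoeffZ mcoeffX; case: eqP => [->|_]; rewrite ?mulr1 ?mulr0 // mulrC.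
Qed.

Lemma mcoeff_linmap A i m : (tnth (linmap A) i)@_m = \sum_j A i j * (U_(j)%MM == m)%:R.
Proof.
rewrite tnth_mktuple (raddf_sum (mcoeff m)).
by apply: eq_bigr => j _ /=; rewrite mcoeffZ mcoeffX.
Qed.

Lemma mcoeffU_linmap A i j : (tnth (linmap A) i)@_U_(j) = A i j.
Proof.
rewrite mcoeff_linmap (bigD1 j) //= eqxx mulr1 big1 ?addr0 //.
by move=> l /negbTE lj; rewrite eq_mnm1 lj mulr0.
Qed.

Lemma mcoeff_linmap_eq0 A i m : mdeg m != 1%N -> (tnth (linmap A) i)@_m = 0.
Proof.
move=> m1; rewrite mcoeff_linmap big1 // => j _.
by case: eqP => [Ujm|]; [rewrite -Ujm mdeg1 in m1 | rewrite mulr0].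
Qed.

Lemma linpart_comp g h : (forall i, (tnth h i)@_0 = 0) ->
  linpart [tuple tnth g i \mPo h | i < n] = linpart g *m linpart h.
Proof.
move=> h0; apply/matrixP => i j; rewrite !mxE tnth_mktuple mcoeffU_comp.
apply: eq_bigr => l _; rewrite !mxE (meval_eq _ h0) -mcoeff0_meval -mcoeffU_mderiv //.
Qed.

End AffineMaps.

Arguments dilation {F n} s.

Section PolynomialAutomorphisms.
Variables (R : realType) (n : nat).
Local Notation C := R[i].
Local Notation endo := (pendo R n).
Implicit Types (f g : endo) (A B : 'M[C]_n).

Lemma pcomp_transl a b :
  Defs.pcomp (transl a) (transl b) = transl (fun i => b i + a i) :> endo.
Proof.
apply: eq_from_tnth => i; rewrite !tnth_mktuple comp_mpolyD comp_mpolyXU -tnth_nth.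
by rewrite tnth_mktuple comp_mpolyC mpolyCD addrA.
Qed.

Lemma transl_eq_pid a : a =1 (fun=> 0) -> transl a = pid R n.
Proof. by move=> a0; apply: eq_from_tnth => i; rewrite !tnth_mktuple a0 mpolyC0 addr0. Qed.

Lemma jonq_transl a : jonq (transl a : endo).
Proof.
split.
  exists (transl (fun i => - a i)).
  by split; rewrite pcomp_transl transl_eq_pid // => i; rewrite ?addNr ?addrN.
move=> i m; rewrite mcoeff_msupp mcoeff_transl => nz j ji.
have [<-|/negbTE Uim] := eqVneq U_(i)%MM m; first by rewrite mnm1E -val_eqE (gtn_eqF ji).
by move: nz; rewrite Uim add0r; have [->|] := eqVneq m 0%MM; rewrite ?mnm0E ?mulr0 ?eqxx.
Qed.

Lemma pcomp_dilation s t : Defs.pcomp (dilation s) (dilation t) = dilation (s * t) :> endo.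
Proof.
apply: eq_from_tnth => i; rewrite !tnth_mktuple comp_mpolyZ comp_mpolyXU -tnth_nth.
by rewrite tnth_mktuple scalerA.
Qed.

Lemma dilation1 : dilation 1 = pid R n.
Proof. by apply: eq_from_tnth => i; rewrite !tnth_mktuple scale1r. Qed.

Lemma jonq_dilation s : s != 0 -> jonq (dilation s : endo).
Proof.
move=> s0; split.
  by exists (dilation s^-1); split; rewrite pcomp_dilation ?mulfV ?mulVf ?dilation1.
move=> i m; rewrite tnth_mktuple mcoeff_msupp mcoeffZ mcoeffX => nz j ji.
have [<-|/negbTE Uim] := eqVneq U_(i)%MM m; first by rewrite mnm1E -val_eqE (gtn_eqF ji).
by move: nz; rewrite Uim mulr0 eqxx.
Qed.

Lemma pcomp_linmap A B : Defs.pcomp (linmap A) (linmap B) = linmap (A *m B) :> endo.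
Proof.
apply: eq_from_tnth => i; rewrite !tnth_mktuple raddf_sum /=.
under eq_bigr do rewrite comp_mpolyZ comp_mpolyXU -tnth_nth tnth_mktuple scaler_sumr.
rewrite exchange_big /=; apply: eq_bigr => k _; rewrite mxE scaler_suml.
by apply: eq_bigr => j _; rewrite scalerA.
Qed.

Lemma linmap1 : linmap 1%:M = pid R n.
Proof.
apply: eq_from_tnth => i; rewrite !tnth_mktuple (bigD1 i) //= mxE eqxx scale1r.
by rewrite big1 ?addr0 // => j /negbTE ji; rewrite mxE eq_sym ji scale0r.
Qed.

Lemma is_aut_linmap A : A \in unitmx -> is_aut (linmap A : endo).
Proof.
by move=> Au; exists (linmap (invmx A)); split; rewrite pcomp_linmap ?mulmxV ?mulVmx ?linmap1.
Qed.

Lemma linear_aut_linmap A : A \in unitmx -> linear_aut (linmap A : endo).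
Proof. by move=> Au; exists A; split=> // i; rewrite tnth_mktuple. Qed.

Lemma linmap_jonq_lower A (i j : 'I_n) :
  jonq (linmap A : endo) -> (j < i)%N -> A i j = 0.
Proof.
case=> _ lower ji; apply/eqP; apply: contraT => Aij.
have UjA : U_(j)%MM \in msupp (tnth (linmap A) i) by rewrite mcoeff_msupp mcoeffU_linmap.
by have := lower i _ UjA j ji; rewrite mnm1E eqxx.
Qed.

Lemma deg_le_mcoeff d f :
  (forall i m, (tnth f i)@_m != 0 -> (mdeg m <= d)%N) -> deg_le d f.
Proof.
move=> fd i; rewrite msizeE; apply/bigmax_leqP_seq => m.
by rewrite mcoeff_msupp => /fd.
Qed.

Lemma deg_le_linmap d A : deg_le d.+1 (linmap A : endo).
Proof.
apply: deg_le_mcoeff => i m; have [-> //|m1] := eqVneq (mdeg m) 1%N.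
by rewrite mcoeff_linmap_eq0 ?eqxx.
Qed.

Lemma pinverse_mcoeff0 g g' : pinverse g g' ->
  (forall i, (tnth g i)@_0 = 0) -> forall i, (tnth g' i)@_0 = 0.
Proof.
case=> _ g'g g0 i; have := congr1 (fun t : endo => (tnth t i)@_0) g'g.
rewrite /= !tnth_mktuple mcoeff0_comp mcoeffX mnm1_eq0 mulr0n mcoeff0_meval => e.
by rewrite -[in RHS]e; apply: meval_eq => l; rewrite g0.
Qed.

Lemma linpart_pid : linpart (pid R n) = 1%:M.
Proof. by apply/matrixP => i j; rewrite !mxE tnth_mktuple mcoeffXU. Qed.

Lemma linpart_unit g g' : pinverse g g' ->
  (forall i, (tnth g i)@_0 = 0) -> linpart g \in unitmx.
Proof.
move=> gg' g0; have g'0 := pinverse_mcoeff0 gg' g0.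
case: gg' => gg' _; case: (@mulmx1_unit _ _ (linpart g) (linpart g')) => //.
by rewrite -linpart_comp // -/(Defs.pcomp g g') gg' linpart_pid.
Qed.

Definition conj_dilation g (s : C) : endo :=
  Defs.pcomp (Defs.pcomp (dilation s^-1) g) (dilation s).

Lemma mcoeff_conj_dilation g s i m : s != 0 -> (tnth g i)@_0 = 0 ->
  (tnth (conj_dilation g s) i)@_m = ((tnth g i)@_m *: 'X^((mdeg m).-1)).[s].
Proof.
move=> s0 g0; rewrite !tnth_mktuple mcoeff_comp_dilation comp_mpolyZ comp_mpolyXU -tnth_nth.
rewrite mcoeffZ hornerZ hornerXn.
have [->|] := eqVneq m 0%MM; first by rewrite g0 !mulr0 mul0r.
by rewrite -mdeg_eq0; case: (mdeg m) => // e _; rewrite exprSr -mulrA mulVKf // mulrC.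
Qed.

Lemma mcoeff_linmap_linpart g i m : (tnth g i)@_0 = 0 ->
  (tnth (linmap (linpart g)) i)@_m = ((tnth g i)@_m *: 'X^((mdeg m).-1)).[0].
Proof.
move=> g0; rewrite hornerZ hornerXn.
have [/eqP/mdeg1P[l /eqP ->]|m1] := eqVneq (mdeg m) 1%N.
  by rewrite mcoeffU_linmap mxE mdeg1 expr0 mulr1.
rewrite mcoeff_linmap_eq0 //; have [->|] := eqVneq m 0%MM; first by rewrite g0 mul0r.
by rewrite -mdeg_eq0; case: (mdeg m) m1 => [|[|e]] // _ _; rewrite exprS mul0r mulr0.
Qed.

Lemma deg_le_conj_dilation d g s : s != 0 -> (forall i, (tnth g i)@_0 = 0) ->
  deg_le d g -> deg_le d (conj_dilation g s).
Proof.
move=> s0 g0 gd; apply: deg_le_mcoeff => i m; rewrite mcoeff_conj_dilation // hornerZ => nz.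
have mg : m \in msupp (tnth g i).
  by rewrite mcoeff_msupp; apply: contraNneq nz => ->; rewrite mul0r.
by rewrite -ltnS (leq_trans (msize_mdeg_lt mg)).
Qed.

Lemma ind_closed_curve (X : endo -> Prop) d (G : C -> endo) L
    (V : 'I_#|coord_index n d| -> {poly C}) :
    ind_closed X -> is_aut L -> deg_le d L ->
    (forall s, s != 0 -> [/\ X (G s), is_aut (G s) & deg_le d (G s)]) ->
    (forall s, s != 0 -> coefvec (G s) =1 (fun j => (V j).[s])) ->
  coefvec L =1 (fun j => (V j).[0]) -> X L.
Proof.
move=> Xcl Laut Ld GX GV LV; have [S XS] := Xcl d.
apply/(XS L Laut Ld) => P SP; rewrite (meval_eq _ LV); apply: meval_poly_at0 => s s0.
have [XG Gaut Gd] := GX s s0.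
by rewrite -(meval_eq _ (GV s s0)); apply: (XS _ Gaut Gd).1.
Qed.

Lemma linpart_mem (H : endo -> Prop) g :
    is_aut_subgroup H -> ind_closed H -> (forall s, s != 0 -> H (dilation s)) ->
  H g -> (forall i, (tnth g i)@_0 = 0) -> H (linmap (linpart g)).
Proof.
move=> [Haut _ Hcomp _] Hcl Hdil Hg g0; have [g' gg'] := Haut g Hg.
pose d := (\max_i msize (tnth g i)).+1.
have gd : deg_le d g.
  move=> i; apply: leq_trans (leq_bigmax (F := fun l => msize (tnth g l)) i) _.
  by rewrite -addn2 leq_addr.
pose V (j : 'I_#|coord_index n d|) := let im := enum_val j in
  (tnth g im.1)@_(bmnm im.2) *: 'X^((mdeg (bmnm im.2)).-1).
apply: (ind_closed_curve (G := conj_dilation g) (V := V) Hcl).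
- exact/is_aut_linmap/(linpart_unit gg' g0).
- exact: deg_le_linmap.
- move=> s s0; have Hgs : H (conj_dilation g s).
    exact: Hcomp (Hcomp _ _ (Hdil _ (invr_neq0 s0)) Hg) (Hdil _ s0).
  by split; [|exact: Haut|exact: deg_le_conj_dilation].
- by move=> s s0 j; apply: mcoeff_conj_dilation.
- by move=> j; apply: mcoeff_linmap_linpart.
Qed.

Definition recenter f (a : 'I_n -> C) : endo :=
  Defs.pcomp (transl (fun i => - (tnth f i).@[a])) (Defs.pcomp f (transl a)).

Lemma tnth_recenter f a i :
  tnth (recenter f a) i = (tnth f i \mPo transl a) - ((tnth f i).@[a])%:MP.
Proof.
by rewrite !tnth_mktuple comp_mpolyD comp_mpolyXU -tnth_nth comp_mpolyC tnth_mktuple mpolyCN.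
Qed.

Lemma mcoeff0_recenter f a i : (tnth (recenter f a) i)@_0 = 0.
Proof. by rewrite tnth_recenter mcoeffB mcoeffC eqxx mulr1 mcoeff0_comp_transl subrr. Qed.

Lemma linpart_recenter f a : linpart (recenter f a) = \matrix_(i, j) ((tnth f i)^`M(j)).@[a].
Proof.
apply/matrixP => i j.
by rewrite !mxE tnth_recenter mcoeffB mcoeffC mnm1_eq0 mulr0 subr0 mcoeffU_comp_transl.
Qed.

Lemma recenter_mem (H : endo -> Prop) f a :
  is_aut_subgroup H -> (forall g, jonq g -> H g) -> H f -> H (recenter f a).
Proof.
by case=> _ _ Hcomp _ HJ Hf; apply/Hcomp/Hcomp/HJ/jonq_transl => //; apply/HJ/jonq_transl.
Qed.

Lemma not_jonq_mderiv f : is_aut f -> ~ jonq f ->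
  exists i j : 'I_n, (j < i)%N /\ (tnth f i)^`M(j) != 0.
Proof.
move=> faut nf.
have /existsP[i /existsP[j /andP[ji fij]]] :
  [exists i : 'I_n, exists j : 'I_n, (j < i)%N && ((tnth f i)^`M(j) != 0)]; last by exists i, j.
apply: contraT => /existsPn triangular; case: nf; split=> // i m mf j ji.
by move: (triangular i) => /existsPn/(_ j); rewrite ji negbK => /eqP /mderiv_eq0_mnm; apply.
Qed.

End PolynomialAutomorphisms.

Theorem proposition3p3 (R : realType) (n : nat) (H : pendo R n -> Prop) :
  (2 <= n)%N ->
  is_aut_subgroup H ->
  ind_closed H ->
  (forall f, jonq f -> H f) ->
  (exists f, H f /\ ~ jonq f) ->
  exists f, H f /\ linear_aut f /\ ~ jonq f.
Proof.
move=> _ Hsub Hcl HJ [f [Hf not_jonq_f]]; have [Haut _ _ _] := Hsub.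
have [i [j [ji fij]]] := not_jonq_mderiv (Haut f Hf) not_jonq_f.
have [a fija] := mpoly_nonroot fij.
have Hg : H (recenter f a) := recenter_mem a Hsub HJ Hf.
have [g' gg'] := Haut _ Hg.
exists (linmap (linpart (recenter f a))); split; [|split].
- apply: linpart_mem Hsub Hcl _ Hg (mcoeff0_recenter f a) => s s0.
  exact/HJ/jonq_dilation.
- exact/linear_aut_linmap/(linpart_unit gg' (mcoeff0_recenter f a)).
- move=> /linmap_jonq_lower/(_ ji); rewrite linpart_recenter mxE => fija0.
  by rewrite fija0 eqxx in fija.
Qed.
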